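(* Let $b\in(1,n)$ be an integer dividing $n$. For any $\mathbf{M}\in\mathcal{M}\mathcal{M}^{*(b,n)}$ there exist $\mathbf{L}_1,\mathbf{L}_2\in\mathcal{B}\mathcal{D}^{(n/b,n)}$ and $\mathbf{R}\in\mathcal{B}\mathcal{D}^{(b,n)}$ such that $\mathbf{M}=(\mathbf{P}_{(b,n)}^\top\mathbf{L}_1\mathbf{P}_{(b,n)})\mathbf{R}(\mathbf{P}_{(b,n)}^\top\mathbf{L}_2\mathbf{P}_{(b,n)})$.
   Context: Indices are 0-based; matrices over $\mathbb{F}\in\{\mathbb{R},\mathbb{C}\}$, $^*$ is conjugate transpose. For $c$ dividing $n$, $\mathcal{B}\mathcal{D}^{(c,n)}$ is the class of $n\times n$ block-diagonal matrices $\mathrm{diag}(\mathbf{R}_0,\dots,\mathbf{R}_{n/c-1})$ with arbitrary $c\times c$ blocks; $\mathcal{D}\mathcal{B}^{(c,n)}$ is the class of $n\times n$ matrices which, partitioned into an $(n/c)\times(n/c)$ grid of $c\times c$ blocks, have every block diagonal. $\mathcal{M}^{(b,n)}$ is the class of products $\mathbf{L}\mathbf{R}$ with $\mathbf{L}\in\mathcal{D}\mathcal{B}^{(b,n)}$, $\mathbf{R}\in\mathcal{B}\mathcal{D}^{(b,n)}$, and $\mathcal{M}\mathcal{M}^{*(b,n)}$ is the class of products $\mathbf{M}_1\mathbf{M}_2^*$ with $\mathbf{M}_1,\mathbf{M}_2\in\mathcal{M}^{(b,n)}$. For $0\le i<n$ write $i=i_1b+i_0$ with $0\le i_0<b$ and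 set $\sigma_{(b,n)}(i)=i_0\frac{n}{b}+i_1$; $\mathbf{P}_{(b,n)}$ is the permutation matrix of $\sigma_{(b,n)}$, so that $(\mathbf{P}_{(b,n)}\mathbf{X}\mathbf{P}_{(b,n)}^\top)[\sigma_{(b,n)}(i),\sigma_{(b,n)}(j)]=\mathbf{X}[i,j]$. *)

From HB Require Import structures.
From mathcomp Require Import all_boot all_order all_algebra.
Set Implicit Arguments. Unset Strict Implicit. Unset Printing Implicit Defensive.
Import Order.TTheory GRing.Theory Num.Theory.
Local Open Scope ring_scope.

(* The ground field F in {R, C} is modelled inside a numeric closed field C
   (e.g. algC, or R[i]): F = C when [real_only = false], and F = the real
   elements of C when [real_only = true]. *)
Definition inF (C : numClosedFieldType) (real_only : bool) (x : C) : bool :=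
  if real_only then x \is Num.real else true.

Definition mxF (C : numClosedFieldType) (real_only : bool) m n (A : 'M[C]_(m, n)) :=
  forall i j, inF real_only (A i j).

Definition ctr (C : numClosedFieldType) m n (A : 'M[C]_(m, n)) : 'M[C]_(n, m) :=
  (map_mx Num.conj A)^T.

Definition isBD (C : numClosedFieldType) (c n : nat) (A : 'M[C]_n) :=
  forall i j : 'I_n, (i %/ c)%N != (j %/ c)%N -> A i j = 0.

(* DB^(c,n): (n/c) x (n/c) grid of c x c blocks, each block diagonal *)
Definition isDB (C : numClosedFieldType) (c n : nat) (A : 'M[C]_n) :=
  forall i j : 'I_n, (i %% c)%N != (j %% c)%N -> A i j = 0.

Definition isM (C : numClosedFieldType) (real_only : bool) (b n : nat) (M : 'M[C]_n) :=
  exists (L R : 'M[C]_n), [/\ mxF real_only L, mxF real_only R,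
    isDB b L, isBD b R & M = L *m R].

Definition isMMstar (C : numClosedFieldType) (real_only : bool) (b n : nat) (M : 'M[C]_n) :=
  exists (M1 M2 : 'M[C]_n), [/\ isM real_only b M1, isM real_only b M2
    & M = M1 *m ctr M2].

Definition sigma (b n i : nat) : nat := ((i %% b) * (n %/ b) + i %/ b)%N.

(* permutation matrix of sigma: P[sigma c, c] = 1, so (P X P^T)[s i, s j] = X[i,j] *)
Definition Pmx (C : numClosedFieldType) (b n : nat) : 'M[C]_n :=
  \matrix_(r < n, c < n) ((r : nat) == sigma b n c)%:R.

From HB Require Import structures.
From mathcomp Require Import all_boot all_order all_algebra.
From mathcomp Require Import fingroup perm.
Import GRing.Theory Num.Theory.
Local Open Scope ring_scope.

(* Factor M = (L1 R1) (L2 R2)^* as L1 (R1 R2^* ) L2^*.  Block-diagonal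
   matrices are closed under products and conjugate transposes, so the middle
   factor is in BD^(b,n) and L2^* stays in DB^(b,n).  Since sigma_(b,n) i div
   (n/b) = i mod b, conjugation by P_(b,n) turns DB^(b,n) into BD^(n/b,n). *)

Section BlockDiagonalBy.
Variables (C : numClosedFieldType) (n : nat) (T : eqType) (f : 'I_n -> T).

Definition block_diag_by (A : 'M[C]_n) := forall i j, f i != f j -> A i j = 0.

Lemma block_diag_by_mul (A B : 'M[C]_n) :
  block_diag_by A -> block_diag_by B -> block_diag_by (A *m B).
Proof.
move=> hA hB i j fij; rewrite mxE big1 // => k _.
have [fik | /hA -> ] := eqVneq (f i) (f k); last by rewrite mul0r.
by rewrite hB ?mulr0 // -fik.
Qed.

Lemma block_diag_by_ctr (A : 'M[C]_n) : block_diag_by A -> block_diag_by (ctr A).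
Proof. by move=> hA i j fij; rewrite !mxE hA ?rmorph0 // eq_sym. Qed.

End BlockDiagonalBy.

Section BDandDB.
Variables (C : numClosedFieldType) (c n : nat).
Implicit Types A B : 'M[C]_n.

Lemma isBD_mul A B : isBD c A -> isBD c B -> isBD c (A *m B).
Proof. exact: (@block_diag_by_mul _ _ _ (fun i : 'I_n => (i %/ c)%N)). Qed.

Lemma isBD_ctr A : isBD c A -> isBD c (ctr A).
Proof. exact: (@block_diag_by_ctr _ _ _ (fun i : 'I_n => (i %/ c)%N)). Qed.

Lemma isDB_ctr A : isDB c A -> isDB c (ctr A).
Proof. exact: (@block_diag_by_ctr _ _ _ (fun i : 'I_n => (i %% c)%N)). Qed.

End BDandDB.

Section EntriesInF.
Variables (C : numClosedFieldType) (real_only : bool).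

Lemma mxF_mul m n p (A : 'M[C]_(m, n)) (B : 'M[C]_(n, p)) :
  mxF real_only A -> mxF real_only B -> mxF real_only (A *m B).
Proof.
case: real_only => // hA hB i j; rewrite mxE /inF.
by apply: rpred_sum => k _; apply: rpredM; [apply: hA | apply: hB].
Qed.

Lemma mxF_ctr m n (A : 'M[C]_(m, n)) : mxF real_only A -> mxF real_only (ctr A).
Proof. by case: real_only => // hA i j; rewrite !mxE /inF conj_Creal //; apply: hA. Qed.

Lemma mxF_mxsub m n m' n' (f : 'I_m' -> 'I_m) (g : 'I_n' -> 'I_n) (A : 'M[C]_(m, n)) :
  mxF real_only A -> mxF real_only (mxsub f g A).
Proof. by move=> hA i j; rewrite mxE. Qed.

End EntriesInF.

Lemma ctr_mul (C : numClosedFieldType) m n p (A : 'M[C]_(m, n)) (B : 'M[C]_(n, p)) :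
  ctr (A *m B) = ctr B *m ctr A.
Proof. by rewrite /ctr map_mxM trmx_mul. Qed.

Lemma mxsub_permK (R : Type) n (s : 'S_n) (A : 'M[R]_n) :
  mxsub s s (mxsub s^-1%g s^-1%g A) = A.
Proof. by apply/matrixP => i j; rewrite !mxE !permK. Qed.

Section Shuffle.
Variables (b n : nat).
Hypotheses (b_gt0 : (0 < b)%N) (b_dvd_n : (b %| n)%N).

Lemma divn_ord_lt (i : 'I_n) : (i %/ b < n %/ b)%N.
Proof. by rewrite ltn_divLR // divnK. Qed.

Lemma sigma_lt (i : 'I_n) : (sigma b n i < n)%N.
Proof.
apply: (@leq_trans ((i %% b).+1 * (n %/ b))%N).
  by rewrite mulSn (addnC (n %/ b)%N) ltn_add2l divn_ord_lt.
by rewrite -[leqRHS](divnK b_dvd_n) [(_ * b)%N]mulnC leq_mul2r ltn_pmod ?orbT.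
Qed.

Lemma sigma_divn (i : 'I_n) : (sigma b n i %/ (n %/ b))%N = (i %% b)%N.
Proof.
have i1_lt := divn_ord_lt i.
by rewrite /sigma divnMDl ?(divn_small i1_lt) ?addn0 // (leq_ltn_trans _ i1_lt).
Qed.

Lemma sigma_modn (i : 'I_n) : (sigma b n i %% (n %/ b))%N = (i %/ b)%N.
Proof. by rewrite /sigma modnMDl modn_small // divn_ord_lt. Qed.

Definition shuffle_fun (i : 'I_n) : 'I_n := Ordinal (sigma_lt i).

Lemma shuffle_fun_inj : injective shuffle_fun.
Proof.
move=> i j /(congr1 val) /= eq_ij; apply/val_inj => /=.
by rewrite (divn_eq i b) (divn_eq j b) -!sigma_divn -!sigma_modn eq_ij.
Qed.

Definition shuffle : 'S_n := perm shuffle_fun_inj.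

Lemma shuffle_divn (i : 'I_n) : (shuffle i %/ (n %/ b))%N = (i %% b)%N.
Proof. by rewrite permE sigma_divn. Qed.

Variable C : numClosedFieldType.

Lemma Pmx_shuffle : Pmx C b n = (perm_mx shuffle)^T.
Proof. by apply/matrixP => r c; rewrite !mxE permE eq_sym. Qed.

Lemma Pmx_conj (A : 'M[C]_n) :
  (Pmx C b n)^T *m A *m Pmx C b n = mxsub shuffle shuffle A.
Proof.
rewrite Pmx_shuffle trmxK tr_perm_mx -col_permE -row_permE.
by apply/matrixP => i j; rewrite !mxE.
Qed.

Lemma isBD_unshuffle (A : 'M[C]_n) :
  isDB b A -> isBD (n %/ b) (mxsub shuffle^-1%g shuffle^-1%g A).
Proof. by move=> hA i j hij; rewrite mxE hA // -!shuffle_divn !permKV. Qed.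

End Shuffle.

Theorem propositionC11 (C : numClosedFieldType) (real_only : bool) (b n : nat)
  (hb1 : (1 < b)%N) (hbn : (b < n)%N) (hdiv : (b %| n)%N) (M : 'M[C]_n) :
  isMMstar real_only b M ->
  exists (L1 L2 R : 'M[C]_n),
    [/\ mxF real_only L1, mxF real_only L2 & mxF real_only R] /\
    [/\ isBD (n %/ b) L1, isBD (n %/ b) L2 & isBD b R] /\
        M = ((Pmx C b n)^T *m L1 *m Pmx C b n) *m R *m ((Pmx C b n)^T *m L2 *m Pmx C b n).
Proof.
have b_gt0 : (0 < b)%N := ltnW hb1.
case=> _ [_ [[L1 [R1 [FL1 FR1 DL1 BR1 ->]]] [L2 [R2 [FL2 FR2 DL2 BR2 ->]]] ->]].
set s := @shuffle b n b_gt0 hdiv.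
exists (mxsub s^-1%g s^-1%g L1), (mxsub s^-1%g s^-1%g (ctr L2)), (R1 *m ctr R2).
split; [split | split; [split |]].
- exact: mxF_mxsub.
- by apply/mxF_mxsub/mxF_ctr.
- by apply/mxF_mul/mxF_ctr.
- exact: isBD_unshuffle.
- by apply/isBD_unshuffle/isDB_ctr.
- by apply/isBD_mul/isBD_ctr.
- by rewrite !Pmx_conj !mxsub_permK ctr_mul !mulmxA.
Qed.
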